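(* Let $V$ be a finite vocabulary, each word $x\in V$ having a nonempty perturbation set $P_x\subseteq V$. For words $x,x'$ write $n_x=|P_x|$, $n_{x'}=|P_{x'}|$ and $n_{x,x'}=|P_x\cap P_{x'}|$. For $X=x_1,\ldots,x_L\in V^L$ let $\Pi_X$ be the probability mass function on $V^L$ with $\Pi_X(Z)=\prod_{i=1}^L\mathbb{I}\{z_i\in P_{x_i}\}/|P_{x_i}|$. Then for any sentences $X=x_1,\ldots,x_L$ and $X'=x'_1,\ldots,x'_L$ in $V^L$ and any $\lambda\ge0$, $$\sum_{Z\in V^L}\big(\lambda\Pi_X(Z)-\Pi_{X'}(Z)\big)_+=\lambda\Big[1-\prod_{j\in[L],x_j\ne x'_j}\frac{n_{x_j,x'_j}}{n_{x_j}}\Big]+\Big[\prod_{j\in[L],x_j\ne x'_j}\frac{n_{x_j,x'_j}}{n_{x_j}}\Big]\Big(\lambda-\prod_{j\in[L],x_j\ne x'_j}\frac{n_{x_j}}{n_{x'_j}}\Big)_+,$$ where $(s)_+=\max(s,0)$. Consequently, if $x'_j\in S_{x_j}$ for all $j$ and $|P_x|=|P_{x'}|$ for every word $x$ and every $x'\in S_x$ (where $S_x\subseteq V$ are given synonym sets), then $$\sum_{Z\in V^L}\big(\lambda\Pi_X(Z)-\Pi_{X'}(Z)\big)_+=\lambda\Big[1-\prod_{j\in[L],x_j\ne x'_j}\frac{n_{x_j,x'_j}}{n_{x_j}}\Big]+\Big[\prod_{j\in[L],x_j\ne x'_j}\frac{n_{x_j,x'_j}}{n_{x_j}}\Big](\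lambda-1)_+.$$
   Context: Empty products equal $1$. *)

From HB Require Import structures.
From mathcomp Require Import all_boot all_order all_algebra.
Set Implicit Arguments. Unset Strict Implicit. Unset Printing Implicit Defensive.
Import Order.TTheory GRing.Theory Num.Theory.
Local Open Scope ring_scope.

Definition PiX (R : fieldType) (V : finType) (P : V -> {set V}) (L : nat)
    (X Z : {ffun 'I_L -> V}) : R :=
  \prod_(i < L) ((Z i \in P (X i))%:R / (#|P (X i)|)%:R).

Definition pospart (R : realDomainType) (s : R) : R := Num.max s 0.

From HB Require Import structures.
From mathcomp Require Import all_boot all_order all_algebra.
From mathcomp Require Import ring.
Set Implicit Arguments. Unset Strict Implicit. Unset Printing Implicit Defensive.
Import Order.TTheory GRing.Theory Num.Theory.
Local Open Scope ring_scope.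

(* Pi_X is the uniform distribution on the box B_X = prod_i P_{x_i}, of size
   N_X = prod_i n_{x_i}.  Pointwise, (lam Pi_X - Pi_X')_+ equals lam / N_X on
   B_X \ B_X', (lam / N_X - 1 / N_X')_+ on B_X /\ B_X', and 0 elsewhere.
   Summing, with |B_X /\ B_X'| = prod_i n_{x_i,x'_i} =: M, gives
   lam (1 - M / N_X) + M (lam / N_X - 1 / N_X')_+; the factors with
   x_j = x'_j cancel in M / N_X and in N_X / N_X'. *)

Lemma pospartZ (R : realDomainType) (c s : R) :
  0 <= c -> c * pospart s = pospart (c * s).
Proof. by move=> c_ge0; rewrite /pospart maxr_pMr // mulr0. Qed.

Lemma pospart_natb_diff (R : realDomainType) (a b : bool) (s t : R) :
  0 <= s -> 0 <= t ->
  pospart (a%:R * s - b%:R * t)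
    = a%:R * s - (a && b)%:R * s + (a && b)%:R * pospart (s - t).
Proof.
move=> s_ge0 t_ge0; rewrite /pospart.
case: a; case: b;
  rewrite /= ?(mul1r, mul0r, subr0, sub0r, subrr, add0r, addr0, oppr0).
- by [].
- by rewrite max_l.
- by rewrite max_r // oppr_le0.
- by rewrite maxxx.
Qed.

Lemma prodr_natb (R : comPzSemiRingType) (L : nat) (b : 'I_L -> bool) :
  \prod_(i < L) (b i)%:R = [forall i, b i]%:R :> R.
Proof.
have [/forallP b_all | /forallPn [i bNi]] := boolP [forall i, b i].
  by rewrite big1 // => i _; rewrite b_all.
by rewrite (bigD1 i) //= (negbTE bNi) mul0r.
Qed.

Lemma prodr_cond_ratio (R : numFieldType) (L : nat) (c : pred 'I_L)
    (f g : 'I_L -> nat) :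
  (forall j, ~~ c j -> f j = g j) -> (forall j, g j != 0%N) ->
  \prod_(j < L | c j) ((f j)%:R / (g j)%:R)
    = (\prod_(j < L) f j)%N%:R / (\prod_(j < L) g j)%N%:R :> R.
Proof.
move=> fg_off_c g_neq0; rewrite big_mkcond /=.
rewrite (eq_bigr (fun j => (f j)%:R / (g j)%:R)) => [|j _]; last first.
  by case: ifP => // /negbT /fg_off_c ->; rewrite divff // pnatr_eq0.
by rewrite prodf_div !natr_prod.
Qed.

Section Box.

Variables (V : finType) (L : nat).
Implicit Types (F G : 'I_L -> {set V}) (Z : {ffun 'I_L -> V}).

Definition in_box F Z : bool := [forall i, Z i \in F i].

Definition box_card F : nat := \prod_(i < L) #|F i|.

Lemma in_boxI F G Z :
  in_box (fun i => F i :&: G i) Z = in_box F Z && in_box G Z.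
Proof.
apply/forallP/andP => [FG_Z | [/forallP F_Z /forallP G_Z] i].
  by split; apply/forallP => i; have /setIP[] := FG_Z i.
by rewrite inE F_Z G_Z.
Qed.

Lemma card_box F : #|in_box F| = box_card F.
Proof.
have := @card_family 'I_L (fun _ => V) (fun i => mem (F i)).
rewrite /box_card foldrE big_map big_enum /= => <-.
by apply: eq_card => Z; rewrite !inE.
Qed.

Lemma sum_in_box (R : pzSemiRingType) F :
  \sum_Z (in_box F Z)%:R = (box_card F)%:R :> R.
Proof.
rewrite -card_box -sum1_card natr_sum [RHS]big_mkcond; apply: eq_bigr => Z _.
by rewrite -[Z \in _]/(in_box F Z); case: (in_box F Z).
Qed.

Lemma box_card_gt0 F : (forall i, F i != set0) -> (0 < box_card F)%N.
Proof. by move=> F_neq0; apply: prodn_gt0 => i; rewrite card_gt0. Qed.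

End Box.

Lemma PiXE (R : fieldType) (V : finType) (P : V -> {set V}) (L : nat)
    (X Z : {ffun 'I_L -> V}) :
  PiX R P X Z = (in_box (P \o X) Z)%:R / (box_card (P \o X))%:R.
Proof. by rewrite /PiX big_split /= prodr_natb prodfV natr_prod. Qed.

Section SumPospart.

Variables (R : realFieldType) (V : finType) (P : V -> {set V}).
Hypothesis P_neq0 : forall x, P x != set0.
Variables (L : nat) (X X' : {ffun 'I_L -> V}) (lam : R).
Hypothesis lam_ge0 : 0 <= lam.

Let N : R := (box_card (P \o X))%:R.
Let N' : R := (box_card (P \o X'))%:R.
Let M : R := (box_card (fun i => P (X i) :&: P (X' i)))%:R.

Let box_card_P_gt0 (Y : {ffun 'I_L -> V}) : 0 < (box_card (P \o Y))%:R :> R.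
Proof. by rewrite ltr0n; apply: box_card_gt0 => i; apply: P_neq0. Qed.

Let N_gt0 : 0 < N := box_card_P_gt0 X.
Let N'_gt0 : 0 < N' := box_card_P_gt0 X'.

Lemma sum_pospart_PiX :
  \sum_(Z : {ffun 'I_L -> V}) pospart (lam * PiX R P X Z - PiX R P X' Z)
    = lam * (1 - M / N) + M / N * pospart (lam - N / N').
Proof.
pose in_both Z := in_box (fun i => P (X i) :&: P (X' i)) Z.
have pointwise Z : pospart (lam * PiX R P X Z - PiX R P X' Z)
    = (in_box (P \o X) Z)%:R * (lam / N) - (in_both Z)%:R * (lam / N)
      + (in_both Z)%:R * pospart (lam / N - 1 / N').
  rewrite /in_both in_boxI !PiXE -/N -/N' mulrCA div1r pospart_natb_diff //.
    exact: divr_ge0 lam_ge0 (ltW N_gt0).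
  by rewrite invr_ge0 ltW.
rewrite (eq_bigr _ (fun Z _ => pointwise Z)) big_split sumrB /=.
rewrite -!mulr_suml !sum_in_box -/N -/M.
have -> : pospart (lam - N / N') = N * pospart (lam / N - 1 / N').
  rewrite pospartZ ?ltW //; congr pospart.
  by field; rewrite -/N -/N' !lt0r_neq0.
by field; rewrite -/N lt0r_neq0.
Qed.

End SumPospart.

Theorem lemma2 (R : realFieldType) (V : finType) (P : V -> {set V})
    (hP : forall x : V, P x != set0) (L : nat)
    (X X' : {ffun 'I_L -> V}) (lam : R) (hlam : 0 <= lam) :
  let q := \prod_(j < L | X j != X' j)
             ((#|P (X j) :&: P (X' j)|)%:R / (#|P (X j)|)%:R) in
  (\sum_(Z : {ffun 'I_L -> V}) pospart (lam * PiX R P X Z - PiX R P X' Z)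
     = lam * (1 - q)
       + q * pospart (lam - \prod_(j < L | X j != X' j)
                               ((#|P (X j)|)%:R / (#|P (X' j)|)%:R)))
  /\
  (forall S : V -> {set V},
     (forall x x', x' \in S x -> #|P x| = #|P x'|) ->
     (forall j : 'I_L, X' j \in S (X j)) ->
     \sum_(Z : {ffun 'I_L -> V}) pospart (lam * PiX R P X Z - PiX R P X' Z)
       = lam * (1 - q) + q * pospart (lam - 1)).
Proof.
move=> q.
have P_card_neq0 x : #|P x| != 0%N by rewrite cards_eq0 hP.
have q_ratio : q = (box_card (fun i => P (X i) :&: P (X' i)))%:R
                   / (box_card (P \o X))%:R.
  by rewrite /q prodr_cond_ratio // => j /negPn /eqP ->; rewrite setIid.
have size_ratio : \prod_(j < L | X j != X' j)
      ((#|P (X j)|)%:R / (#|P (X' j)|)%:R)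
    = (box_card (P \o X))%:R / (box_card (P \o X'))%:R :> R.
  by rewrite prodr_cond_ratio // => j /negPn /eqP ->.
have sumE := sum_pospart_PiX hP X X' hlam.
rewrite -q_ratio -size_ratio in sumE.
split=> [//| S card_syn X'_syn].
rewrite sumE size_ratio.
suff -> : box_card (P \o X) = box_card (P \o X').
  by rewrite divff // pnatr_eq0 -lt0n; apply: box_card_gt0 => i; apply: hP.
by apply: eq_bigr => i _; apply: card_syn.
Qed.
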